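(* Let $U,V\in U(n-1)$ and $(\tau,t),(\sigma,s)\in\mathfrak{N}_n$. Let $T=R_UT_{(\tau,t)}$ and $S=R_VT_{(\sigma,s)}$. Then $S$ commutes with $T$ if and only if $VU=UV$ and $(V^*\tau,t)(\sigma,s)=(U^*\sigma,s)(\tau,t)$ in $\mathfrak{N}_n$.
   Context: The Heisenberg group $\mathfrak{N}_n$ is $\mathbb{C}^{n-1}\times\mathbb{R}$ with product $(\zeta_1,v_1)(\zeta_2,v_2)=(\zeta_1+\zeta_2,\,v_1+v_2+2\,\mathrm{Im}(\zeta_2^*\zeta_1))$. Work in $U(n,1)$ defined as the group of $(n+1)\times(n+1)$ complex matrices $g$ with $g^*Jg=J$, where $J=\begin{pmatrix}0&0&1\\0&I_{n-1}&0\\1&0&0\end{pmatrix}$. For $U\in U(n-1)$, $R_U=\mathrm{diag}(1,U,1)$ (Heisenberg rotation), and for $(\tau,t)\in\mathfrak{N}_n$, $T_{(\tau,t)}=\begin{pmatrix}1&-\tau^*&\frac{-|\tau|^2+ti}{2}\\0&I_{n-1}&\tau\\0&0&1\end{pmatrix}$ (Heisenberg translation). *)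

From HB Require Import structures.
From mathcomp Require Import all_boot all_order all_algebra.
Set Implicit Arguments. Unset Strict Implicit. Unset Printing Implicit Defensive.
Import Order.TTheory GRing.Theory Num.Theory.
Local Open Scope ring_scope.

(* Complex scalars: an arbitrary numClosedFieldType C (e.g. algC, or R[i]),
   with conjugation z^*, imaginary unit 'i and imaginary part 'Im z.
   The dimension n-1 of the Heisenberg group's C^{n-1} factor is called m,
   so matrices of U(n,1) have size 1 + m + 1 = n + 1. *)

Section Heis.
Variable C : numClosedFieldType.
Variable m : nat.

Definition adj (p q : nat) (A : 'M[C]_(p, q)) : 'M[C]_(q, p) :=
  map_mx Num.conj (A^T).

Definition unitary (U : 'M[C]_m) : Prop := adj U *m U = 1%:M.

(* Heisenberg group N_n = C^{m} x R; the real coordinate is an element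
   v of C with v \is Num.real. *)
Definition heis_mem (x : 'cV[C]_m * C) : Prop := x.2 \is Num.real.

Definition hdot (z2 z1 : 'cV[C]_m) : C := (adj z2 *m z1) 0 0.

Definition heis_mul (x y : 'cV[C]_m * C) : 'cV[C]_m * C :=
  (x.1 + y.1, x.2 + y.2 + 2 * 'Im (hdot y.1 x.1)).

Definition blk3 (a : 'M[C]_(1,1)) (b : 'M[C]_(1,m)) (c : 'M[C]_(1,1))
                (d : 'M[C]_(m,1)) (e : 'M[C]_(m,m)) (f : 'M[C]_(m,1))
                (g : 'M[C]_(1,1)) (h : 'M[C]_(1,m)) (i : 'M[C]_(1,1))
  : 'M[C]_(1 + m + 1) :=
  block_mx (block_mx a b d e) (col_mx c f) (row_mx g h) i.

Definition hrot (U : 'M[C]_m) : 'M[C]_(1 + m + 1) :=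
  blk3 1%:M 0 0 0 U 0 0 0 1%:M.

Definition htrans (x : 'cV[C]_m * C) : 'M[C]_(1 + m + 1) :=
  let tau := x.1 in let t := x.2 in
  blk3 1%:M (- adj tau) ((- hdot tau tau + t * 'i) / 2)%:M
       0 1%:M tau
       0 0 1%:M.

End Heis.

From HB Require Import structures.
From mathcomp Require Import all_boot all_order all_algebra.
Set Implicit Arguments. Unset Strict Implicit. Unset Printing Implicit Defensive.
Import Order.TTheory GRing.Theory Num.Theory.
Local Open Scope ring_scope.

(* Both R_U T_(tau,t) and R_V T_(sigma,s) are "unipotent affine" block
   matrices [[1, b, a], [0, W, f], [0, 0, 1]], which multiply like the affine
   group.  Comparing the blocks of S T and T S, commutation amounts to
   VU = UV, tau + U^* sigma = sigma + V^* tau and sigma^* U tau = tau^* V sigma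
   (the remaining block follows from these by unitarity).  On the Heisenberg
   side the first coordinates give the same vector identity, the real
   coordinates give Im (sigma^* U tau) = Im (tau^* V sigma), and the real parts
   agree automatically: expanding the squared norm of the common vector
   V^* tau + sigma = U^* sigma + tau yields Re (sigma^* U tau) = Re (tau^* V sigma).
   The real coordinates t and s cancel on both sides, so their realness is
   never used. *)

Section Adjoint.
Variable C : numClosedFieldType.

Lemma adjK p q (A : 'M[C]_(p, q)) : adj (adj A) = A.
Proof. by apply/matrixP => i j; rewrite !mxE conjCK. Qed.

Lemma adj_inj p q : injective (@adj C p q).
Proof. exact: (can_inj (@adjK p q)). Qed.

Lemma adjM p q r (A : 'M[C]_(p, q)) (B : 'M[C]_(q, r)) :
  adj (A *m B) = adj B *m adj A.
Proof. by rewrite /adj trmx_mul map_mxM. Qed.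

Lemma adjD p q (A B : 'M[C]_(p, q)) : adj (A + B) = adj A + adj B.
Proof. by rewrite /adj linearD map_mxD. Qed.

Lemma unitary_mulmx_adj n (U : 'M[C]_n) : unitary U -> U *m adj U = 1%:M.
Proof. exact: mulmx1C. Qed.

Variable m : nat.
Implicit Types (x y : 'cV[C]_m) (A : 'M[C]_m).

Lemma hdotC x y : hdot x y = (hdot y x)^*.
Proof. by rewrite /hdot -[adj x *m y]adjK adjM adjK [in LHS]/adj !mxE. Qed.

Lemma hdot_mulmxr A x y : hdot y (A *m x) = hdot (adj A *m y) x.
Proof. by rewrite /hdot adjM adjK mulmxA. Qed.

Lemma hdotDl x y z : hdot (x + y) z = hdot x z + hdot y z.
Proof. by rewrite /hdot adjD mulmxDl mxE. Qed.

Lemma hdotDr x y z : hdot z (x + y) = hdot z x + hdot z y.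
Proof. by rewrite /hdot mulmxDr mxE. Qed.

Lemma hdot_unitary A x y : unitary A -> hdot (adj A *m x) (adj A *m y) = hdot x y.
Proof. by move=> uA; rewrite -hdot_mulmxr mulmxA unitary_mulmx_adj // mul1mx. Qed.

Lemma hdot_adj_addr A x y : unitary A ->
  hdot (adj A *m x + y) (adj A *m x + y) =
  hdot x x + hdot y y + (hdot x (A *m y) + (hdot x (A *m y))^*).
Proof.
move=> uA; rewrite !hdotDl !hdotDr hdot_unitary // [hdot (adj A *m x) y]hdotC.
rewrite hdot_mulmxr adjK [hdot (A *m y) x]hdotC conjCK.
by rewrite [_^* + hdot y y]addrC addrACA.
Qed.

End Adjoint.

Lemma eqC_Re_Im (C : numClosedFieldType) (z w : C) :
  z + z^* = w + w^* -> 'Im z = 'Im w -> z = w.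
Proof. by move=> eRe eIm; apply/eqCP; rewrite !ReE eRe. Qed.

Section UnipotentAffine.
Variable C : numClosedFieldType.
Variable m : nat.

Definition unip (b : 'M[C]_(1, m)) (W : 'M[C]_m) (f : 'cV[C]_m) (a : 'M[C]_1) :=
  blk3 1%:M b a 0 W f 0 0 1%:M.

Lemma unip_mul b W f a b' W' f' a' :
  unip b W f a *m unip b' W' f' a' =
  unip (b' + b *m W') (W *m W') (W *m f' + f) (a' + b *m f' + a).
Proof.
rewrite /unip /blk3 !mulmx_block mul_col_row mul_block_col mul_col_mx
  mul_row_block mul_mx_row mul_row_col add_block_mx add_col_mx add_row_mx.
by rewrite !(mul1mx, mulmx1, mul0mx, mulmx0, addr0, add0r).
Qed.

Lemma unip_eq b W f a b' W' f' a' :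
  unip b W f a = unip b' W' f' a' <-> [/\ b = b', W = W', f = f' & a = a'].
Proof.
split=> [|[-> -> -> ->] //].
by rewrite /unip /blk3 => /eq_block_mx[/eq_block_mx[_ -> _ ->] /eq_col_mx[-> ->] _ _].
Qed.

Lemma unip_commuteP b W f a b' W' f' a' :
  unip b W f a *m unip b' W' f' a' = unip b' W' f' a' *m unip b W f a <->
  [/\ b' + b *m W' = b + b' *m W, W *m W' = W' *m W,
       W *m f' + f = W' *m f + f' & b *m f' = b' *m f].
Proof.
have eA : a' + b *m f' + a = a + b' *m f + a' <-> b *m f' = b' *m f.
  by rewrite addrC [RHS]addrC !addrA [a + a']addrC; split=> [/addrI|->].
rewrite !unip_mul; split=> [/unip_eq[-> -> -> /eA]|[-> -> -> /eA ->]] //.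
Qed.

Lemma hrot_htransE W x y :
  hrot W *m htrans (x, y) =
  unip (- adj x) W (W *m x) ((- hdot x x + y * 'i) / 2)%:M.
Proof.
by rewrite [hrot W]/(unip 0 W 0 0) unip_mul !(mulmx1, mul0mx, addr0, add0r).
Qed.

End UnipotentAffine.

Section Commutation.
Variable C : numClosedFieldType.
Variable m : nat.
Variables (U V : 'M[C]_m) (tau sigma : 'cV[C]_m) (t s : C).
Hypotheses (uU : unitary U) (uV : unitary V).

Lemma unitary_commute_translation :
  V *m U = U *m V -> tau + adj U *m sigma = sigma + adj V *m tau ->
  V *m (U *m tau) + V *m sigma = U *m (V *m sigma) + U *m tau.
Proof.
move=> cVU /(congr1 (mulmx (U *m V))); rewrite !mulmxDr !mulmxA -{2}cVU.
rewrite -[V *m U *m adj U]mulmxA -[U *m V *m adj V]mulmxA.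
by rewrite !unitary_mulmx_adj // !mulmx1 cVU.
Qed.

Lemma rot_trans_commuteP :
  let T := hrot U *m htrans (tau, t) in
  let S := hrot V *m htrans (sigma, s) in
  S *m T = T *m S <->
  [/\ V *m U = U *m V, tau + adj U *m sigma = sigma + adj V *m tau
    & hdot sigma (U *m tau) = hdot tau (V *m sigma)].
Proof.
have adjE (x y : 'cV[C]_m) (A : 'M[C]_m) :
    - adj x + - adj y *m A = - adj (x + adj A *m y).
  by rewrite adjD adjM adjK mulNmx opprD.
have scalarE (x y : 'cV[C]_m) : - adj y *m x = (- hdot y x)%:M.
  by rewrite mulNmx [adj y *m x]mx11_scalar raddfN.
rewrite /= !hrot_htransE; apply: iff_trans (unip_commuteP _ _ _ _ _ _ _ _) _.
rewrite !adjE !scalarE.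
split=> [[/oppr_inj/adj_inj eB -> _ /(congr1 determinant)]|[cVU eB ->]].
  by rewrite !det_scalar1 => /oppr_inj.
by split=> //; [rewrite eB | apply: unitary_commute_translation].
Qed.

Lemma heis_mul_swapP :
  heis_mul (adj V *m tau, t) (sigma, s) = heis_mul (adj U *m sigma, s) (tau, t) <->
  tau + adj U *m sigma = sigma + adj V *m tau /\
  hdot sigma (U *m tau) = hdot tau (V *m sigma).
Proof.
have hdot_adjr (A : 'M[C]_m) x y : hdot y (adj A *m x) = (hdot x (A *m y))^*.
  by rewrite hdot_mulmxr adjK hdotC.
rewrite /heis_mul !hdot_adjr !Im_conj (addrC s).
have swap_sum : adj V *m tau + sigma = adj U *m sigma + tau <->
                tau + adj U *m sigma = sigma + adj V *m tau.
  by rewrite addrC [RHS]addrC; split=> ->.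
have two_neq0 : (2 : C) != 0 by rewrite pnatr_eq0.
split=> [[e1 /addrI/(mulfI two_neq0)/oppr_inj eIm]|[/swap_sum -> ->]] //.
split; first exact/swap_sum.
apply: eqC_Re_Im (esym eIm).
have := hdot_adj_addr tau sigma uV.
by rewrite e1 hdot_adj_addr // (addrC (hdot sigma sigma)) => /addrI.
Qed.

End Commutation.

Theorem lemma3p2 (C : numClosedFieldType) (m : nat)
    (U V : 'M[C]_m) (tau sigma : 'cV[C]_m) (t s : C) :
  unitary U -> unitary V ->
  t \is Num.real -> s \is Num.real ->
  let T := hrot U *m htrans (tau, t) in
  let S := hrot V *m htrans (sigma, s) in
  (S *m T = T *m S) <->
  (V *m U = U *m V /\
   heis_mul (adj V *m tau, t) (sigma, s) = heis_mul (adj U *m sigma, s) (tau, t)).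
Proof.
move=> uU uV _ _ T S.
apply: iff_trans (rot_trans_commuteP tau sigma t s uU uV) _.
have heisP := heis_mul_swapP tau sigma t s uU uV.
by split=> [[cVU eB ep]|[cVU /heisP[eB ep]]] //; split=> //; apply/heisP.
Qed.
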